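(* Let three binary classifiers $i,j,k$ label a test with $Q_a,Q_b\ge1$, and let $\alpha x^2-\alpha x+\gamma$ be the prevalence quadratic built from their observed decision frequencies (as in the context). If the classifiers are error independent on the test and this quadratic is not identically zero, then both of its roots are rational numbers (indeed they are $p_a$ and $p_b$). Equivalently, if the prevalence quadratic is not identically zero and has an irrational (or non-real) root, then at least one pair or 3-way error correlation $\Gamma_{c,d;\ell}$ or $\Gamma_{i,j,k;\ell}$ is nonzero.
   Context: Test of $Q$ items with true labels $t_q\in\{a,b\}$; $Q_\ell=\#\{q:t_q=\ell\}$, $p_\ell=Q_\ell/Q$. Classifier $c\in\{i,j,k\}$ labels item $q$ with $\ell^q_c\in\{a,b\}$; label accuracy $p_{c,\ell}=\frac1{Q_\ell}\#\{q:\ell^q_c=\ell,t_q=\ell\}$. $f_{\ell_i\ell_j\ell_k}=\frac1Q\#\{q:\ell^q_i=\ell_i,\ell^q_j=\ell_j,\ell^q_k=\ell_k\}$. Define $f_{b_i}=f_{baa}+f_{bab}+f_{bba}+f_{bbb}$, $f_{b_j}=f_{aba}+f_{abb}+f_{bba}+f_{bbb}$, $f_{b_k}=f_{aab}+f_{abb}+f_{bab}+f_{bbb}$, $\Delta_{i,j}=f_{bba}+f_{bbb}-f_{b_i}f_{b_j}$, $\Delta_{i,k}=f_{bab}+f_{bbb}-f_{b_i}f_{b_k}$, $\Delta_{j,k}=f_{abb}+f_{bbb}-f_{b_j}f_{b_k}$, $\Delta_{i,j,k}=f_{bbb}-(f_{b_i}f_{b_j}f_{b_k}+f_{b_i}\Delta_{j,k}+f_{b_j}\Delta_{i,k}+f_{b_k}\Delta_{i,j})$,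 $\alpha=\Delta_{i,j,k}^2+4\Delta_{i,j}\Delta_{i,k}\Delta_{j,k}$, $\gamma=\Delta_{i,j}\Delta_{i,k}\Delta_{j,k}$. Pair error correlation $\Gamma_{c,d;\ell}=\frac1{Q_\ell}\sum_q(\mathbf 1[\ell^q_c=\ell]-p_{c,\ell})(\mathbf 1[\ell^q_d=\ell]-p_{d,\ell})\mathbf 1[t_q=\ell]$; 3-way error correlation $\Gamma_{i,j,k;\ell}=\frac1{Q_\ell}\sum_q\prod_{c\in\{i,j,k\}}(\mathbf 1[\ell^q_c=\ell]-p_{c,\ell})\,\mathbf 1[t_q=\ell]$. Error independence means all pair and 3-way correlations vanish for both labels $\ell\in\{a,b\}$. *)

From mathcomp Require Import all_boot all_order all_algebra all_field.
Set Implicit Arguments. Unset Strict Implicit. Unset Printing Implicit Defensive.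
Import Order.TTheory GRing.Theory Num.Theory.
Local Open Scope ring_scope.

Notation la := false.
Notation lb := true.

Section Defs.
Variable Q : nat.
(* t q = true label of item q; ci, cj, ck q = label assigned by classifier *)
Variables (t ci cj ck : 'I_Q -> bool).

Definition Qcnt (l : bool) : nat := #|[set q : 'I_Q | t q == l]|.
Definition prevalence (l : bool) : rat := (Qcnt l)%:R / Q%:R.
Definition acc (c : 'I_Q -> bool) (l : bool) : rat :=
  (#|[set q : 'I_Q | (c q == l) && (t q == l)]|)%:R / (Qcnt l)%:R.

Definition freq (x y z : bool) : rat :=
  (#|[set q : 'I_Q | [&& ci q == x, cj q == y & ck q == z]]|)%:R / Q%:R.

Definition f_bi : rat := freq lb la la + freq lb la lb + freq lb lb la + freq lb lb lb.
Definition f_bj : rat := freq la lb la + freq la lb lb + freq lb lb la + freq lb lb lb.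
Definition f_bk : rat := freq la la lb + freq la lb lb + freq lb la lb + freq lb lb lb.
Definition D_ij : rat := freq lb lb la + freq lb lb lb - f_bi * f_bj.
Definition D_ik : rat := freq lb la lb + freq lb lb lb - f_bi * f_bk.
Definition D_jk : rat := freq la lb lb + freq lb lb lb - f_bj * f_bk.
Definition D_ijk : rat :=
  freq lb lb lb - (f_bi * f_bj * f_bk + f_bi * D_jk + f_bj * D_ik + f_bk * D_ij).
Definition alpha : rat := D_ijk ^+ 2 + 4 * D_ij * D_ik * D_jk.
Definition gamma : rat := D_ij * D_ik * D_jk.

Definition ind (b : bool) : rat := (b : nat)%:R.

Definition Gamma2 (c d : 'I_Q -> bool) (l : bool) : rat :=
  (Qcnt l)%:R^-1 * \sum_(q : 'I_Q)
     (ind (c q == l) - acc c l) * (ind (d q == l) - acc d l) * ind (t q == l).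

Definition Gamma3 (l : bool) : rat :=
  (Qcnt l)%:R^-1 * \sum_(q : 'I_Q)
     (ind (ci q == l) - acc ci l) * (ind (cj q == l) - acc cj l)
     * (ind (ck q == l) - acc ck l) * ind (t q == l).

Definition error_independent : Prop :=
  forall l : bool,
    [/\ Gamma2 ci cj l = 0, Gamma2 ci ck l = 0, Gamma2 cj ck l = 0 & Gamma3 l = 0].

End Defs.

From mathcomp Require Import all_boot all_order all_algebra all_field.
From mathcomp Require Import ring.
Set Implicit Arguments. Unset Strict Implicit. Unset Printing Implicit Defensive.
Import Order.TTheory GRing.Theory Num.Theory.
Local Open Scope ring_scope.

(* Conditionally on the true label l, error independence says that the three
   indicators [c q == l] are uncorrelated in every mixed moment, so the
   conditional joint law of the three decisions is the product of Bernoulli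
   laws with means the label accuracies.  The decision frequencies are
   therefore a two-component mixture, with weights p_a and p_b = 1 - p_a, of
   product laws; for such frequencies gamma = p_a p_b alpha is a polynomial
   identity, so the prevalence quadratic is alpha (x - p_a) (x - p_b). *)

Section WeightedMoments.
Variables (R : comPzRingType) (I : finType).

Lemma moment2_factor {w u1 u2 : I -> R} {N p1 p2 : R} :
  \sum_i w i = N -> \sum_i u1 i * w i = N * p1 -> \sum_i u2 i * w i = N * p2 ->
  \sum_i (u1 i - p1) * (u2 i - p2) * w i = 0 ->
  \sum_i u1 i * u2 i * w i = N * p1 * p2.
Proof.
move=> mass mean1 mean2.
have expand i : (u1 i - p1) * (u2 i - p2) * w i = u1 i * u2 i * w i
    + (- p2) * (u1 i * w i) + (- p1) * (u2 i * w i) + p1 * p2 * w i by ring.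
rewrite (eq_bigr _ (fun i _ => expand i)) !big_split /= -!mulr_sumr.
rewrite mass mean1 mean2; move: (\sum_i _) => s cov0.
by apply: subr0_eq; rewrite -cov0; ring.
Qed.

Variables (w u1 u2 u3 : I -> R) (N p1 p2 p3 : R).
Hypotheses (mass : \sum_i w i = N) (mean1 : \sum_i u1 i * w i = N * p1)
  (mean2 : \sum_i u2 i * w i = N * p2) (mean3 : \sum_i u3 i * w i = N * p3).
Hypotheses (cov12 : \sum_i (u1 i - p1) * (u2 i - p2) * w i = 0)
  (cov13 : \sum_i (u1 i - p1) * (u3 i - p3) * w i = 0)
  (cov23 : \sum_i (u2 i - p2) * (u3 i - p3) * w i = 0)
  (cov123 : \sum_i (u1 i - p1) * (u2 i - p2) * (u3 i - p3) * w i = 0).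

Let mom12 := moment2_factor mass mean1 mean2 cov12.
Let mom13 := moment2_factor mass mean1 mean3 cov13.
Let mom23 := moment2_factor mass mean2 mean3 cov23.

Lemma moment3_factor : \sum_i u1 i * u2 i * u3 i * w i = N * p1 * p2 * p3.
Proof.
have expand i : (u1 i - p1) * (u2 i - p2) * (u3 i - p3) * w i
  = u1 i * u2 i * u3 i * w i + (- p3) * (u1 i * u2 i * w i)
  + (- p2) * (u1 i * u3 i * w i) + (- p1) * (u2 i * u3 i * w i)
  + p2 * p3 * (u1 i * w i) + p1 * p3 * (u2 i * w i) + p1 * p2 * (u3 i * w i)
  + (- (p1 * p2 * p3)) * w i by ring.
move: cov123; rewrite (eq_bigr _ (fun i _ => expand i)) !big_split /=.
rewrite -!mulr_sumr mass mean1 mean2 mean3 mom12 mom13 mom23.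
move: (\sum_i _) => s cov0.
by apply: subr0_eq; rewrite -cov0; ring.
Qed.

Lemma sum_prod_affine3 a1 b1 a2 b2 a3 b3 :
  \sum_i (a1 + b1 * u1 i) * (a2 + b2 * u2 i) * (a3 + b3 * u3 i) * w i
  = N * (a1 + b1 * p1) * (a2 + b2 * p2) * (a3 + b3 * p3).
Proof.
have expand i : (a1 + b1 * u1 i) * (a2 + b2 * u2 i) * (a3 + b3 * u3 i) * w i
  = a1 * a2 * a3 * w i + a2 * a3 * b1 * (u1 i * w i)
  + a1 * a3 * b2 * (u2 i * w i) + a1 * a2 * b3 * (u3 i * w i)
  + a3 * b1 * b2 * (u1 i * u2 i * w i) + a2 * b1 * b3 * (u1 i * u3 i * w i)
  + a1 * b2 * b3 * (u2 i * u3 i * w i)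
  + b1 * b2 * b3 * (u1 i * u2 i * u3 i * w i) by ring.
rewrite (eq_bigr _ (fun i _ => expand i)) !big_split /= -!mulr_sumr.
by rewrite mass mean1 mean2 mean3 mom12 mom13 mom23 moment3_factor; ring.
Qed.

End WeightedMoments.

Lemma if_compl_affine (R : pzRingType) (b : bool) (v : R) :
  (if b then v else 1 - v) = (~~ b)%:R + (if b then 1 else -1) * v.
Proof. by case: b; rewrite /= ?add0r ?mul1r ?mulN1r. Qed.

Lemma card_set_sum_ind n (P : pred 'I_n) : (#|[set q | P q]|)%:R = \sum_q ind (P q).
Proof.
rewrite -sum1_card natr_sum big_mkcond /=; apply: eq_bigr => q _.
by rewrite inE /ind; case: (P q).
Qed.

Lemma ind_andb a b : ind (a && b) = ind a * ind b.
Proof. by case: a; case: b; rewrite /ind /= ?mulr1 ?mulr0. Qed.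

Lemma ind_eq_label (c x l : bool) :
  ind (c == x) = if x == l then ind (c == l) else 1 - ind (c == l).
Proof. by case: c; case: x; case: l; rewrite /ind /= ?subrr ?subr0. Qed.

Lemma scaled_sum_eq0 (N s : rat) : N != 0 -> N^-1 * s = 0 -> s = 0.
Proof. by move=> N0 /eqP; rewrite mulf_eq0 invr_eq0 (negbTE N0) => /eqP. Qed.

Section ErrorIndependence.
Variables (Q : nat) (t ci cj ck : 'I_Q -> bool).
Hypotheses (Qa_gt0 : (1 <= Qcnt t la)%N) (Qb_gt0 : (1 <= Qcnt t lb)%N).
Hypothesis indep : error_independent t ci cj ck.

Definition cond_freq (c : 'I_Q -> bool) (l x : bool) : rat :=
  if x == l then acc t c l else 1 - acc t c l.

Lemma Qcnt_neq0 l : (Qcnt t l)%:R != 0 :> rat.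
Proof. by case: l; rewrite pnatr_eq0 -lt0n. Qed.

Lemma sum_ind_label l : \sum_q ind (t q == l) = (Qcnt t l)%:R.
Proof. by rewrite /Qcnt card_set_sum_ind. Qed.

Lemma sum_ind_correct c l :
  \sum_q ind (c q == l) * ind (t q == l) = (Qcnt t l)%:R * acc t c l.
Proof.
rewrite /acc mulrC divfK ?Qcnt_neq0 // card_set_sum_ind.
by apply: eq_bigr => q _; rewrite ind_andb.
Qed.

Lemma sum_ind_cond_freq l x y z :
  \sum_q ind (ci q == x) * ind (cj q == y) * ind (ck q == z) * ind (t q == l)
  = (Qcnt t l)%:R * cond_freq ci l x * cond_freq cj l y * cond_freq ck l z.
Proof.
have [G12 G13 G23 G123] := indep l.
have N0 := Qcnt_neq0 l.
rewrite /cond_freq !if_compl_affine.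
under eq_bigr => q _ do rewrite (ind_eq_label (ci q) x l) (ind_eq_label (cj q) y l)
  (ind_eq_label (ck q) z l) !if_compl_affine.
apply: sum_prod_affine3; rewrite ?sum_ind_label ?sum_ind_correct //.
- exact: scaled_sum_eq0 G12.
- exact: scaled_sum_eq0 G13.
- exact: scaled_sum_eq0 G23.
- exact: scaled_sum_eq0 G123.
Qed.

Lemma Qcnt_la_add_lb : (Qcnt t la + Qcnt t lb)%N = Q.
Proof.
rewrite /Qcnt -[RHS]card_ord -(cardsC [set q | t q == la]); congr (_ + _)%N.
by apply: eq_card => q; rewrite !inE; case: (t q).
Qed.

Lemma prevalence_lb : prevalence t lb = 1 - prevalence t la.
Proof.
have Q0 : Q%:R != 0 :> rat by rewrite pnatr_eq0 -lt0n -Qcnt_la_add_lb addn_gt0 Qa_gt0.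
have QE : Q%:R = (Qcnt t la)%:R + (Qcnt t lb)%:R :> rat by rewrite -natrD Qcnt_la_add_lb.
by apply: (mulIf Q0); rewrite mulrBl !divfK // mul1r QE; ring.
Qed.

Lemma freq_mixture x y z : freq ci cj ck x y z =
    prevalence t la * (cond_freq ci la x * cond_freq cj la y * cond_freq ck la z)
  + prevalence t lb * (cond_freq ci lb x * cond_freq cj lb y * cond_freq ck lb z).
Proof.
have split_label q : ind [&& ci q == x, cj q == y & ck q == z]
  = ind (ci q == x) * ind (cj q == y) * ind (ck q == z) * ind (t q == la)
  + ind (ci q == x) * ind (cj q == y) * ind (ck q == z) * ind (t q == lb).
  by rewrite !ind_andb -mulrDr; case: (t q); rewrite /ind /=; ring.
rewrite /freq card_set_sum_ind (eq_bigr _ (fun q _ => split_label q)) big_split /=.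
by rewrite !sum_ind_cond_freq /prevalence; ring.
Qed.

Lemma gamma_eq_prevalence_alpha :
  gamma ci cj ck = prevalence t la * prevalence t lb * alpha ci cj ck.
Proof.
rewrite /gamma /alpha /D_ijk /D_ij /D_ik /D_jk /f_bi /f_bj /f_bk !freq_mixture.
by rewrite /cond_freq /= prevalence_lb; ring.
Qed.

End ErrorIndependence.

Lemma prevalence_quadratic_roots (F : numFieldType) (a p : rat) (x : F) :
  a != 0 -> ratr a * x ^+ 2 - ratr a * x + ratr (p * (1 - p) * a) = 0 ->
  x = ratr p \/ x = ratr (1 - p).
Proof.
move=> a0 root.
have : ratr a * ((x - ratr p) * (x - ratr (1 - p))) = 0 :> F.
  by rewrite -root !rmorphM rmorphB rmorph1 /=; ring.
move/eqP; rewrite mulf_eq0 fmorph_eq0 (negbTE a0) /= mulf_eq0 !subr_eq0.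
by case/orP => /eqP; [left | right].
Qed.

Theorem theorem3 (Q : nat) (t ci cj ck : 'I_Q -> bool) :
  (1 <= Qcnt t la)%N -> (1 <= Qcnt t lb)%N ->
  error_independent t ci cj ck ->
  ~ (alpha ci cj ck = 0 /\ gamma ci cj ck = 0) ->
  forall x : algC,
    ratr (alpha ci cj ck) * x ^+ 2 - ratr (alpha ci cj ck) * x
      + ratr (gamma ci cj ck) = 0 ->
    (exists r : rat, x = ratr r) /\
    (x = ratr (prevalence t la) \/ x = ratr (prevalence t lb)).
Proof.
move=> Qa_gt0 Qb_gt0 indep not_zero x root.
have pbE := prevalence_lb Qa_gt0.
have gammaE := gamma_eq_prevalence_alpha Qa_gt0 Qb_gt0 indep.
have alpha0 : alpha ci cj ck != 0.
  by apply/eqP => a0; apply: not_zero; rewrite gammaE a0 mulr0.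
rewrite gammaE pbE in root.
rewrite pbE; have [->|->] := prevalence_quadratic_roots alpha0 root.
- by split; [exists (prevalence t la) | left].
- by split; [exists (1 - prevalence t la) | right].
Qed.
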